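(* Let $k\subseteq K_1\subseteq K_2$ with $K_1/k$ and $K_2/k$ q-finite of unbounded exponent. Then for every $s\in\mathbb{N}^*$ and every $n\in\mathbb{N}$, $U_s^n(K_1/k)\ge U_s^n(K_2/k)$. Moreover $Ilqm(K_1/k)\le Ilqm(K_2/k)$, with equality if $K_2/K_1$ is finite.
   Context: All fields lie in an algebraic closure $\Omega$ of a field $k$ of characteristic $p>0$; all extensions are purely inseparable. $L^{p^{-n}}=\{a\in\Omega:a^{p^n}\in L\}$. A minimal generating set of $K/k$ is $G$ with $K=k(G)$ and $x\notin k(G\setminus\{x\})$ for $x\in G$. $di(K/k)=\sup_n|G_n|$ with $G_n$ a minimal generating set of $(k^{p^{-n}}\cap K)/k$; $K/k$ is q-finite if $di(K/k)<\infty$; unbounded exponent means no $e$ with $K^{p^e}\subseteq k$. For finite $L/k$, $o_s(L/k)=\inf\{m: di(k(L^{p^m})/k)<s\}$. For $K/k$ q-finite of unbounded exponent, $U_s^j(K/k)=j-o_s((k^{p^{-j}}\cap K)/k)$, and $Ilqm(K/k)$ is the least $s\ge1$ with $(U_s^j(K/k))_j$ unbounded. *)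

From HB Require Import structures.
From mathcomp Require Import all_boot all_order all_algebra.
Set Implicit Arguments. Unset Strict Implicit. Unset Printing Implicit Defensive.
Import Order.TTheory GRing.Theory Num.Theory.
Local Open Scope ring_scope.

Section Defs.
Variable F : fieldType.
Variable p : nat.

Definition psubset (A B : F -> Prop) : Prop := forall x, A x -> B x.

Definition is_subfield (K : F -> Prop) : Prop :=
  [/\ K 0, K 1, (forall x y, K x -> K y -> K (x - y)),
      (forall x y, K x -> K y -> K (x * y)) &
      (forall x, K x -> x != 0 -> K x^-1)].

Definition adjoin (k G : F -> Prop) : F -> Prop :=
  fun x => forall L, is_subfield L -> psubset k L -> psubset G L -> L x.

Definition minimal_gen (k K G : F -> Prop) : Prop :=
  (forall x, K x <-> adjoin k G x) /\
  (forall x, G x -> ~ adjoin k (fun y => G y /\ y <> x) x).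

Definition card_lt (G : F -> Prop) (s : nat) : Prop :=
  exists l : seq F, [/\ uniq l, (forall x, G x <-> x \in l) & (size l < s)%N].

Definition root_part (k K : F -> Prop) (n : nat) : F -> Prop :=
  fun x => K x /\ k (x ^+ (p ^ n)).

(* di(K/k) < s, i.e. sup_n |G_n| < s *)
Definition di_lt (k K : F -> Prop) (s : nat) : Prop :=
  forall n, exists G, minimal_gen k (root_part k K n) G /\ card_lt G s.

Definition q_finite (k K : F -> Prop) : Prop := exists d, di_lt k K d.

Definition bounded_exponent (k K : F -> Prop) : Prop :=
  exists e, forall x, K x -> k (x ^+ (p ^ e)).

Definition purely_insep (k K : F -> Prop) : Prop :=
  forall x, K x -> exists n, k (x ^+ (p ^ n)).

Definition frob_adjoin (k L : F -> Prop) (m : nat) : F -> Prop :=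
  adjoin k (fun y => exists x, L x /\ y = x ^+ (p ^ m)).

Definition is_o (k L : F -> Prop) (s m : nat) : Prop :=
  di_lt k (frob_adjoin k L m) s /\
  (forall m', di_lt k (frob_adjoin k L m') s -> (m <= m')%N).

Definition is_U (k K : F -> Prop) (s j : nat) (u : int) : Prop :=
  exists o, is_o k (root_part k K j) s o /\ u = (j%:Z - o%:Z)%R.

Definition U_unbounded (k K : F -> Prop) (s : nat) : Prop :=
  forall B : int, exists j u, is_U k K s j u /\ (B < u)%R.

Definition is_Ilqm (k K : F -> Prop) (t : nat) : Prop :=
  [/\ (1 <= t)%N, U_unbounded k K t &
      (forall s, (1 <= s)%N -> U_unbounded k K s -> (t <= s)%N)].

End Defs.

Definition finite_ext (F : fieldType) (K1 K2 : F -> Prop) : Prop :=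
  exists b : seq F, forall x, K2 x ->
    exists c : seq F, [/\ size c = size b, (forall i, (i < size c)%N -> K1 c`_i) &
      x = \sum_(i < size b) c`_i * b`_i].

(* Let k ⊆ M1 ⊆ M2 with M2/k of bounded exponent. The exchange property of
   p-independence (if x^p ∈ D and y ∈ D(x) \ D, then x ∈ D(y)) makes Steinitz's
   exchange lemma available, and adjoining an element whose p-th power is already
   present never shortens a p-independent sequence over k(N^p). Hence a p-independent
   sequence of M1 over k(M1^p) is no longer than any generating sequence of M2, while a
   maximal one generates M1 over k: di is monotone on subfields. Applied to the fields
   k(L^(p^m)) that compute o_s, this gives o_s(K1) <= o_s(K2), i.e. U_s(K1) >= U_s(K2),
   which orders Ilqm. If K2 is spanned over K1 by a finite sequence b, the linear
   independence of 1, x^(p^(j-1)), ..., x over K1 gives K2^(p^|b|) ⊆ K1, so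
   U_s(K2) >= U_s(K1) - |b| and the two Ilqm coincide. *)

From HB Require Import structures.
From mathcomp Require Import all_boot all_order all_algebra.
From mathcomp Require Import boolp ring zify.
Set Implicit Arguments. Unset Strict Implicit. Unset Printing Implicit Defensive.
Import GRing.Theory.

Lemma in_consP (T : eqType) (z x : T) s : z \in x :: s <-> z = x \/ z \in s.
Proof. by rewrite inE; split => [/orP[/eqP|]|[->|->]]; rewrite ?eqxx ?orbT; auto. Qed.

(** * Closure operators with exchange *)

Section Exchange.
Variables (T : eqType) (cl : (T -> Prop) -> T -> Prop) (P : T -> Prop).
Hypothesis cl_ext : forall A x, A x -> cl A x.
Hypothesis cl_sub : forall A B, (forall x, A x -> cl B x) -> forall x, cl A x -> cl B x.
Hypothesis cl_exchange : forall A x y, P x ->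
  cl (fun z => A z \/ z = x) y -> ~ cl A y -> cl (fun z => A z \/ z = y) x.

Fixpoint indep (B : T -> Prop) (a : seq T) : Prop :=
  if a is x :: a' then ~ cl B x /\ indep (fun z => B z \/ z = x) a' else True.

Lemma cl_mono A B : (forall x, A x -> B x) -> forall x, cl A x -> cl B x.
Proof. by move=> AB; apply: cl_sub => x /AB; apply: cl_ext. Qed.

Lemma cl_U1 A x y : cl A x -> cl (fun z => A z \/ z = y) x.
Proof. by apply: cl_mono => z; left. Qed.

Lemma cl_eqU1 A B x : cl A = cl B ->
  cl (fun z => A z \/ z = x) = cl (fun z => B z \/ z = x).
Proof.
move=> eqAB; apply/predeqP => z; split; apply: cl_sub => w [Aw|->];
  try by apply: cl_ext; right.
- by apply: cl_U1; rewrite -eqAB; apply: cl_ext.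
- by apply: cl_U1; rewrite eqAB; apply: cl_ext.
Qed.

Lemma indep_cl_eq a B B' : cl B = cl B' -> indep B a -> indep B' a.
Proof.
elim: a B B' => //= x a IH B B' eqB [Bx Ba]; split; first by rewrite -eqB.
by apply: IH Ba; apply: cl_eqU1.
Qed.

Lemma indep_rcons B a b :
  indep B (rcons a b) <-> indep B a /\ ~ cl (fun z => B z \/ z \in a) b.
Proof.
elim: a B => [|x a IH] B /=.
  have -> : (fun z => B z \/ z \in [::]) = B.
    by apply/predeqP => z; rewrite in_nil; split=> [[] | ] //; left.
  tauto.
rewrite IH; have -> : (fun z => (B z \/ z = x) \/ z \in a) = (fun z => B z \/ z \in x :: a).
  by apply/predeqP => z; rewrite in_consP; tauto.
tauto.
Qed.

Lemma cl_split G B x : cl (fun z => B z \/ z \in G) x -> ~ cl B x ->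
  exists G1 g G2, [/\ G = G1 ++ g :: G2,
    cl (fun z => (B z \/ z \in G1) \/ z = g) x & ~ cl (fun z => B z \/ z \in G1) x].
Proof.
elim: G B => [|g G IH] B clGx Bx.
  by case: Bx; move: clGx; apply: cl_mono => z [|] //; rewrite in_nil.
have [Bgx|Bgx] := pselect (cl (fun z => B z \/ z = g) x).
  exists [::], g, G; split => //.
    by move: Bgx; apply: cl_mono => z [|->]; [left; left|right].
  by move: Bx; apply: contra_not; apply: cl_mono => z [|] //; rewrite in_nil.
have [G1 [g' [G2 [-> clx Nclx]]]] : exists G1 g' G2, [/\ G = G1 ++ g' :: G2,
    cl (fun z => ((B z \/ z = g) \/ z \in G1) \/ z = g') x &
    ~ cl (fun z => (B z \/ z = g) \/ z \in G1) x].
  by apply: IH Bgx; move: clGx; apply: cl_mono => z; rewrite in_consP; tauto.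
exists (g :: G1), g', G2; split => //.
  by move: clx; apply: cl_mono => z; rewrite in_consP; tauto.
by move: Nclx; apply: contra_not; apply: cl_mono => z; rewrite in_consP; tauto.
Qed.

Lemma steinitz a B G : indep B a -> (forall g, g \in G -> P g) ->
  (forall x, x \in a -> cl (fun z => B z \/ z \in G) x) -> size a <= size G.
Proof.
elim: a B G => [|x a IH] B G //= [Bx Ba] PG clG.
have [G1 [g [G2 [eqG clx Nclx]]]] := cl_split (clG x (mem_head _ _)) Bx.
have PG12 z : z \in G1 ++ G2 -> P z.
  by rewrite mem_cat => zG; apply: PG; rewrite eqG mem_cat inE; case/orP: zG => ->; rewrite ?orbT.
have Pg : P g by apply: PG; rewrite eqG mem_cat mem_head orbT.
have clg : cl (fun z => (B z \/ z = x) \/ z \in G1 ++ G2) g.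
  move: (cl_exchange Pg clx Nclx); apply: cl_mono => z; rewrite mem_cat.
  by case=> [[Bz|zG1]|->]; [left; left | right; rewrite zG1 | left; right].
have -> : size G = (size (G1 ++ G2)).+1 by rewrite eqG !size_cat /= addnS.
apply: (IH _ _ Ba PG12) => y ya.
have /cl_sub : cl (fun z => B z \/ z \in G) y by apply: clG; rewrite inE ya orbT.
apply=> z [Bz|]; first by apply: cl_ext; left; left.
rewrite eqG mem_cat inE => /or3P[zG1|/eqP->|zG2] //; apply: cl_ext; right;
  by rewrite mem_cat ?zG1 ?zG2 ?orbT.
Qed.

Lemma indep_extend_base a B c : P c -> ~ cl B c -> (forall x, x \in a -> P x) -> indep B a ->
  exists a', [/\ size a <= (size a').+1, {subset a' <= a} & indep (fun z => B z \/ z = c) a'].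
Proof.
elim: a B => [|x a IH] B Pc Bc Pa /=; first by move=> _; exists [::].
move=> [Bx Ba]; have [Bxc|Bxc] := pselect (cl (fun z => B z \/ z = x) c).
  have Bcx := cl_exchange (Pa x (mem_head _ _)) Bxc Bc.
  have eqcl : cl (fun z => B z \/ z = x) = cl (fun z => B z \/ z = c).
    apply/predeqP => z; split; apply: cl_sub => w [Bw|->] //;
      by apply: cl_ext; left.
  exists a; split => //; [by move=> z za; rewrite inE za orbT | exact: indep_cl_eq Ba].
have Pa' z : z \in a -> P z by move=> za; apply: Pa; rewrite inE za orbT.
have [a' [sza a'a Ba']] := IH _ Pc Bxc Pa' Ba.
exists (x :: a'); split => /=; first by rewrite ltnS.
  by move=> z; rewrite !inE => /orP[->|/a'a ->]; rewrite ?orbT.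
split.
  by move=> Bcx; apply: Bxc; apply: cl_exchange Pc Bcx Bx.
have -> : (fun z => (B z \/ z = c) \/ z = x) = (fun z => (B z \/ z = x) \/ z = c).
  by apply/predeqP => z; tauto.
exact: Ba'.
Qed.

End Exchange.

Lemma indep_transfer (T : eqType) (cl1 cl2 : (T -> Prop) -> T -> Prop) B1 B2 a :
  (forall X, cl1 (fun z => B1 z \/ X z) = cl2 (fun z => B2 z \/ X z)) ->
  indep cl1 B1 a -> indep cl2 B2 a.
Proof.
elim: a B1 B2 => //= x a IH B1 B2 eqcl [Bx Ba]; split.
  have := eqcl (fun _ => False).
  have U0 (B : T -> Prop) : (fun z => B z \/ False) = B by apply/predeqP => z; tauto.
  by rewrite !U0 => <-.
apply: IH Ba => X; have UA (B : T -> Prop) :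
    (fun z => (B z \/ z = x) \/ X z) = (fun z => B z \/ (z = x \/ X z)).
  by apply/predeqP => z; tauto.
by rewrite !UA.
Qed.

Local Open Scope ring_scope.

Section Subfield.
Variables (F : fieldType) (S : F -> Prop).
Hypothesis S_sf : is_subfield S.

Lemma subfield0 : S 0. Proof. by case: S_sf. Qed.
Lemma subfield1 : S 1. Proof. by case: S_sf. Qed.
Lemma subfieldB x y : S x -> S y -> S (x - y). Proof. by case: S_sf => _ _ + _ _; apply. Qed.
Lemma subfieldM x y : S x -> S y -> S (x * y). Proof. by case: S_sf => _ _ _ + _; apply. Qed.
Lemma subfieldN x : S x -> S (- x).
Proof. by move=> Sx; rewrite -sub0r; exact: subfieldB subfield0 Sx. Qed.
Lemma subfieldD x y : S x -> S y -> S (x + y).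
Proof. by move=> Sx Sy; rewrite -[y]opprK; apply: subfieldB Sx (subfieldN Sy). Qed.
Lemma subfieldV x : S x -> S x^-1.
Proof.
have [->|x0] := eqVneq x 0; first by rewrite invr0.
by case: S_sf => _ _ _ _ + Sx; apply.
Qed.
Lemma subfieldX x n : S x -> S (x ^+ n).
Proof.
move=> Sx; elim: n => [|n IH]; first by rewrite expr0; apply: subfield1.
by rewrite exprS; apply: subfieldM.
Qed.
Lemma subfield_nat n : S n%:R.
Proof.
by elim: n => [|n IH]; [apply: subfield0 | rewrite -addn1 natrD; apply: subfieldD IH subfield1].
Qed.
End Subfield.

Section Adjoin.
Variable F : fieldType.
Implicit Types k A B L : F -> Prop.

Lemma adjoin_subfield k A : is_subfield (adjoin k A).
Proof.
split=> [L L_sf _ _|L L_sf _ _|x y Ax Ay L L_sf kL AL|x y Ax Ay L L_sf kL AL|x Ax _ L L_sf kL AL].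
- exact: subfield0.
- exact: subfield1.
- by apply: (subfieldB L_sf); [apply: Ax | apply: Ay].
- by apply: (subfieldM L_sf); [apply: Ax | apply: Ay].
- by apply: (subfieldV L_sf); apply: Ax.
Qed.

Lemma adjoin_base k A x : k x -> adjoin k A x.
Proof. by move=> kx L _ + _; apply. Qed.

Lemma adjoin_gen k A x : A x -> adjoin k A x.
Proof. by move=> Ax L _ _; apply. Qed.

Lemma adjoin_min k A L : is_subfield L -> psubset k L -> psubset A L ->
  psubset (adjoin k A) L.
Proof. by move=> L_sf kL AL x; apply. Qed.

Lemma adjoin_sub k A k' A' : psubset k (adjoin k' A') -> psubset A (adjoin k' A') ->
  psubset (adjoin k A) (adjoin k' A').
Proof. exact: adjoin_min (adjoin_subfield k' A'). Qed.

Lemma adjoin_id k A : is_subfield k -> psubset A k -> adjoin k A = k.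
Proof.
by move=> k_sf Ak; apply/predeqP => x; split; [apply: adjoin_min | apply: adjoin_base].
Qed.

Lemma adjoinU k A B : adjoin k (fun z => A z \/ B z) = adjoin (adjoin k A) B.
Proof.
apply/predeqP => x; split; apply: adjoin_sub.
- by move=> z kz; do 2!apply: adjoin_base.
- by move=> z [Az|Bz]; [apply: adjoin_base; apply: adjoin_gen | apply: adjoin_gen].
- by apply: adjoin_sub => [z|z Az]; [apply: adjoin_base | apply: adjoin_gen; left].
- by move=> z Bz; apply: adjoin_gen; right.
Qed.

End Adjoin.

Definition powimg (F : fieldType) (A : F -> Prop) (q : nat) : F -> Prop :=
  fun y => exists x, A x /\ y = x ^+ q.

Lemma powimg_sub (F : fieldType) (E : F -> Prop) q :
  is_subfield E -> psubset (powimg E q) E.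
Proof. by move=> E_sf _ [x [Ex ->]]; apply: subfieldX. Qed.

Section Frobenius.
Variables (F : fieldType) (p : nat).
Hypothesis p_char : p \in [pchar F].

Lemma pchar_nat_expn m : [pchar F].-nat (p ^ m)%N.
Proof. by rewrite pnatX pnatE ?(pcharf_prime p_char) // p_char. Qed.

Lemma frobB m (x y : F) : (x - y) ^+ (p ^ m) = x ^+ (p ^ m) - y ^+ (p ^ m).
Proof. by rewrite exprDn_pchar ?exprNn_pchar ?pchar_nat_expn. Qed.

Lemma subfield_frob_preim (S : F -> Prop) m :
  is_subfield S -> is_subfield (fun x => S (x ^+ (p ^ m))).
Proof.
have pm_gt0 : (0 < p ^ m)%N by rewrite expn_gt0 prime_gt0 ?(pcharf_prime p_char).
move=> S_sf; split=> [||x y Sx Sy|x y Sx Sy|x Sx _].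
- by rewrite expr0n eqn0Ngt pm_gt0; apply: subfield0.
- by rewrite expr1n; apply: subfield1.
- by rewrite frobB; apply: subfieldB.
- by rewrite exprMn; apply: subfieldM.
- by rewrite exprVn; apply: subfieldV.
Qed.

Lemma adjoin_frob m (E A : F -> Prop) y : adjoin E A y ->
  adjoin (powimg E (p ^ m)) (powimg A (p ^ m)) (y ^+ (p ^ m)).
Proof.
apply: (adjoin_min (subfield_frob_preim m (adjoin_subfield _ _))) => x ?.
- by apply: adjoin_base; exists x.
- by apply: adjoin_gen; exists x.
Qed.

End Frobenius.

(** * The exchange property of p-independence *)

Section SubfieldPoly.
Variables (F : fieldType) (S : F -> Prop).
Hypothesis S_sf : is_subfield S.

Definition subfield_pred : {pred F} := fun x => `[< S x >].

Lemma subfield_predP x : reflect (S x) (x \in subfield_pred).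
Proof. exact: asboolP. Qed.

Fact subfield_pred_divring_closed : GRing.divring_closed subfield_pred.
Proof.
split=> [|x y /subfield_predP Sx /subfield_predP Sy|x y /subfield_predP Sx /subfield_predP Sy];
  apply/subfield_predP; first exact: subfield1.
  exact: subfieldB.
by apply: subfieldM Sx (subfieldV S_sf Sy).
Qed.

HB.instance Definition _ :=
  GRing.isDivringClosed.Build F subfield_pred subfield_pred_divring_closed.

(* The subfield [S] as a field in its own right, so that polynomial division
   and gcds over [S] can be computed there. *)
Record subfield_type := SubfieldType {
  subfield_val :> F;
  subfield_valP : subfield_val \in subfield_pred }.
HB.instance Definition _ := [isSub for subfield_val].
HB.instance Definition _ := [Choice of subfield_type by <:].
HB.instance Definition _ := [SubChoice_isSubIntegralDomain of subfield_type by <:].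
HB.instance Definition _ := [SubIntegralDomain_isSubField of subfield_type by <:].

Lemma polyOver_subfieldP (q : {poly F}) :
  reflect (exists q' : {poly subfield_type}, q = map_poly val q')
          (q \is a polyOver subfield_pred).
Proof.
apply: (iffP polyOverP) => [Sq | [q' ->] i]; last by rewrite coef_map subfield_valP.
exists (\poly_(i < size q) SubfieldType (Sq i)); rewrite -{1}[q]coefK.
by apply/polyP => i; rewrite coef_map !coef_poly; case: ifP.
Qed.

Lemma polyOver_subfield_coef (q : {poly F}) i : q \is a polyOver subfield_pred -> S q`_i.
Proof. by move/polyOverP/(_ i)/subfield_predP. Qed.

Lemma modp_polyOver :
  {in polyOver subfield_pred &, forall q r, q %% r \is a polyOver subfield_pred}.
Proof.
move=> _ _ /polyOver_subfieldP[q ->] /polyOver_subfieldP[r ->].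
by apply/polyOver_subfieldP; exists (q %% r); rewrite map_modp.
Qed.

Lemma gcdp_polyOver :
  {in polyOver subfield_pred &, forall q r, gcdp q r \is a polyOver subfield_pred}.
Proof.
move=> _ _ /polyOver_subfieldP[q ->] /polyOver_subfieldP[r ->].
by apply/polyOver_subfieldP; exists (gcdp q r); rewrite gcdp_map.
Qed.

End SubfieldPoly.

Lemma coef_exp_XsubC_pred (F : fieldType) (x : F) j :
  (0 < j)%N -> (('X - x%:P) ^+ j)`_j.-1 = - (x *+ j).
Proof.
elim: j => [|[|j] IH] // _; first by rewrite expr1 coefB coefX coefC /= sub0r.
rewrite exprS mulrC mulrBr coefB coefMX coefMC /= IH //.
have /eqP := monic_exp j.+1 (monicXsubC x).
rewrite lead_coefE size_exp_XsubC /= => ->.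
by rewrite mul1r [in RHS]mulrS opprD addrC.
Qed.

Section PExchange.
Variables (F : fieldType) (p : nat).
Hypothesis p_char : p \in [pchar F].
Let p_gt0 : (0 < p)%N := prime_gt0 (pcharf_prime p_char).

Lemma XsubC_expp (x : F) : ('X - x%:P) ^+ p = 'X^p - (x ^+ p)%:P.
Proof.
have pchar_poly : p \in [pchar {poly F}] := rmorph_pchar polyC p_char.
by rewrite exprDn_pchar ?exprNn_pchar ?pnatE ?rmorphXn ?(pcharf_prime p_char).
Qed.

(* [gcdp Q ('X^p - x^p)] is [(X - x)^j] up to a constant, with [0 < j < p]; as [j]
   is invertible, its coefficient [- j x] in degree [j - 1] exhibits [x] in [D]. *)
Lemma root_small_polyOver (D : F -> Prop) x (Q : {poly F}) :
  is_subfield D -> D (x ^+ p) -> Q \is a polyOver (subfield_pred D) ->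
  Q != 0 -> (size Q <= p)%N -> root Q x -> D x.
Proof.
move=> D_sf Dxp DQ Q0 szQ rootQ.
set m := 'X^p - (x ^+ p)%:P.
have Dm : m \is a polyOver (subfield_pred D).
  by rewrite polyOverXnsubC; apply/subfield_predP.
set g := gcdp Q m.
have Dg : g \is a polyOver (subfield_pred D) := gcdp_polyOver D_sf DQ Dm.
have /dvdp_exp_XsubCP[j _ eq_g] : g %| ('X - x%:P) ^+ p.
  by rewrite XsubC_expp dvdp_gcdr.
have rootg : root g x by rewrite root_gcd rootQ /root !hornerE subrr.
have j_gt0 : (0 < j)%N.
  by move: rootg; rewrite (eqp_root eq_g); case: j {eq_g} => //; rewrite /root hornerE oner_eq0.
have j_lt_p : (j < p)%N.
  rewrite -ltnS -(size_exp_XsubC j x) -(eqp_size eq_g) ltnS.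
  exact: leq_trans (dvdp_leq Q0 (dvdp_gcdl Q m)) szQ.
move/eqpP: eq_g => [[c1 c2] /andP[c1_0 c2_0] /= eq_g].
have lc : (('X - x%:P) ^+ j)`_j = 1.
  by have /eqP := monic_exp j (monicXsubC x); rewrite lead_coefE size_exp_XsubC.
have gj : c1 * g`_j = c2 by rewrite -coefZ eq_g coefZ lc mulr1.
have gj_neq0 : g`_j != 0 by apply: contraNneq c2_0 => gj0; rewrite -gj gj0 mulr0.
have j_neq0 : (j%:R : F) != 0.
  by rewrite -(dvdn_pcharf p_char); apply: contraTN j_lt_p => /(dvdn_leq j_gt0); rewrite -leqNgt.
have gj1 : g`_j.-1 = g`_j * - (x *+ j).
  by apply: (mulfI c1_0); rewrite mulrA gj -coefZ eq_g coefZ coef_exp_XsubC_pred.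
have -> : x = - (g`_j.-1 / (g`_j * j%:R)).
  by rewrite gj1 -mulr_natr; field; rewrite gj_neq0 j_neq0.
have Dgi i : D g`_i := polyOver_subfield_coef D_sf i Dg.
apply: (subfieldN D_sf); apply: (subfieldM D_sf (Dgi _)); apply: (subfieldV D_sf).
exact (subfieldM D_sf (Dgi j) (subfield_nat D_sf j)).
Qed.

Lemma adjoin1_horner (D : F -> Prop) x y : is_subfield D -> D (x ^+ p) ->
  adjoin D (fun z => z = x) y ->
  exists2 q, q \is a polyOver (subfield_pred D) & y = q.[x].
Proof.
move=> D_sf Dxp.
set R := fun z => exists2 q, q \is a polyOver (subfield_pred D) & z = q.[x].
have RC c : D c -> R c.
  by move=> Dc; exists c%:P; rewrite ?hornerC // polyOverC; apply/subfield_predP.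
have RB a b : R a -> R b -> R (a - b).
  by move=> [qa Dqa ->] [qb Dqb ->]; exists (qa - qb); rewrite ?rpredB ?hornerE.
have RM a b : R a -> R b -> R (a * b).
  by move=> [qa Dqa ->] [qb Dqb ->]; exists (qa * qb); rewrite ?rpredM ?hornerM.
have RX a n : R a -> R (a ^+ n).
  by move=> [q Dq ->]; exists (q ^+ n); rewrite ?rpredX ?horner_exp.
have Rp a : R a -> D (a ^+ p).
  move=> [q Dq ->]; rewrite -(pFrobenius_autE p_char) -horner_map /= pFrobenius_autE.
  apply/subfield_predP/rpred_horner; last exact/subfield_predP.
  apply/polyOverP => i; rewrite coef_map /= pFrobenius_autE.
  exact/subfield_predP/(subfieldX D_sf)/(polyOver_subfield_coef D_sf).
have R_sf : is_subfield R.
  split=> [||||a Ra a0]; [exact: RC (subfield0 D_sf) | exact: RC (subfield1 D_sf) |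
                          exact: RB | exact: RM |].
  have -> : a^-1 = a ^+ p.-1 * (a ^+ p)^-1.
    by rewrite -{2}(prednK p_gt0) exprS invfM mulrA mulrC mulrA mulVf ?expf_neq0 ?mul1r.
  exact/RM/RC/(subfieldV D_sf)/Rp/Ra/RX.
by apply: (adjoin_min R_sf) => [c|z ->]; [apply: RC | exists 'X; rewrite ?polyOverX ?hornerX].
Qed.

(* Write y = r(x) with size r <= p: then x is a root of r - y over D(y). *)
Lemma adjoin1_exchange (D : F -> Prop) x y : is_subfield D -> D (x ^+ p) ->
  adjoin D (fun z => z = x) y -> ~ D y -> adjoin D (fun z => z = y) x.
Proof.
move=> D_sf Dxp /(adjoin1_horner D_sf Dxp)[q Dq ->] Dqx.
set m := 'X^p - (x ^+ p)%:P; set r := q %% m; set D' := adjoin D (fun z => z = q.[x]).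
have D'_sf : is_subfield D' := adjoin_subfield _ _.
have m_neq0 : m != 0 by rewrite -size_poly_eq0 size_XnsubC.
have Dm : m \is a polyOver (subfield_pred D).
  by rewrite polyOverXnsubC; apply/subfield_predP.
have Dr : r \is a polyOver (subfield_pred D) := modp_polyOver D_sf Dq Dm.
have r_x : r.[x] = q.[x] by rewrite [in RHS](divp_eq q m) !hornerE subrr mulr0 add0r.
have szr : (size r <= p)%N by have := ltn_modpN0 q m_neq0; rewrite size_XnsubC.
apply: (root_small_polyOver (Q := r - (q.[x])%:P) D'_sf).
- exact: adjoin_base.
- apply: rpredB; last by rewrite polyOverC; apply/subfield_predP; apply: adjoin_gen.
  by apply: polyOverS Dr => z /subfield_predP Dz; apply/subfield_predP; apply: adjoin_base.
- rewrite subr_eq0; apply: contra_not_neq Dqx => eq_r.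
  by have := polyOver_subfield_coef D_sf 0 Dr; rewrite eq_r coefC.
- apply: leq_trans (size_polyD _ _) _; rewrite geq_max szr size_polyN size_polyC.
  by case: (_ != 0).
- by rewrite /root !hornerE r_x subrr.
Qed.

End PExchange.

(** * p-independent sequences *)

Section PIndependence.
Variables (F : fieldType) (p : nat).
Hypothesis p_char : p \in [pchar F].
Implicit Types (k E N A M : F -> Prop) (a l : seq F).

Lemma adjoin_gen_sub E A B : (forall x, A x -> adjoin E B x) ->
  forall x, adjoin E A x -> adjoin E B x.
Proof. by move=> AB; apply: adjoin_sub => // z Ez; apply: adjoin_base. Qed.

Lemma adjoin_exchange E A x y : E (x ^+ p) ->
  adjoin E (fun z => A z \/ z = x) y -> ~ adjoin E A y ->
  adjoin E (fun z => A z \/ z = y) x.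
Proof.
move=> Exp; rewrite !adjoinU.
by apply: (adjoin1_exchange p_char); [apply: adjoin_subfield | apply: adjoin_base].
Qed.

Lemma adjoin_steinitz E a (G : seq F) : indep (adjoin E) (fun _ => False) a ->
  (forall y, y \in G -> E (y ^+ p)) ->
  (forall x, x \in a -> adjoin E (fun z => z \in G) x) -> (size a <= size G)%N.
Proof.
move=> Ea EG aG; apply: (steinitz (@adjoin_gen _ E) (@adjoin_gen_sub E) (@adjoin_exchange E) Ea EG).
by move=> x /aG; apply: adjoin_gen_sub => z Gz; apply: adjoin_gen; right.
Qed.

Definition frob_base k N := adjoin k (powimg N p).

Definition pindep k N a :=
  indep (adjoin (frob_base k N)) (fun _ => False) a /\ (forall x, x \in a -> N x).

Definition has_pindep k N t := exists2 a, pindep k N a & (t <= size a)%N.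

Lemma frob_base_sub k N : is_subfield N -> psubset k N -> psubset (frob_base k N) N.
Proof. by move=> N_sf kN; apply: adjoin_min => //; apply: powimg_sub. Qed.

Lemma frob_base_expp k N x : N x -> frob_base k N (x ^+ p).
Proof. by move=> Nx; apply: adjoin_gen; exists x. Qed.

Lemma frob_base_adjoin1 k N b :
  frob_base k (adjoin N (fun z => z = b)) = adjoin (frob_base k N) (fun z => z = b ^+ p).
Proof.
apply/predeqP => z; split; apply: adjoin_sub.
- by move=> w kw; do 2!apply: adjoin_base.
- move=> _ [v [Nbv ->]]; have := adjoin_frob p_char (m := 1) Nbv; rewrite expn1.
  apply: adjoin_sub => [w Npw | _ [u [-> ->]]]; last exact: adjoin_gen.
  by apply: adjoin_base; apply: adjoin_gen.
- apply: adjoin_sub => [w|_ [u [Nu ->]]]; first exact: adjoin_base.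
  by apply: adjoin_gen; exists u; split => //; apply: adjoin_base.
- by move=> _ ->; apply: adjoin_gen; exists b; split => //; apply: adjoin_gen.
Qed.

(* Adjoining b adds b^p to the base k(N^p): by exchange an independent sequence loses
   at most one entry, and b itself, which is not in N, can then be appended. *)
Lemma pindep_adjoin1 k N b a : is_subfield N -> psubset k N -> N (b ^+ p) ->
  pindep k N a ->
  exists2 a', pindep k (adjoin N (fun z => z = b)) a' & (size a <= size a')%N.
Proof.
move=> N_sf kN Nbp [Ea aN].
set E := frob_base k N; set c := b ^+ p; set N' := adjoin N (fun z => z = b).
have NN' : psubset N N' by move=> z; apply: adjoin_base.
have E'E : frob_base k N' = adjoin E (fun z => z = c) := frob_base_adjoin1 k N b.
have [Ec|Ec] := pselect (E c).
  exists a => //; split; last by move=> x /aN /NN'.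
  by rewrite E'E adjoin_id //; [apply: adjoin_subfield | move=> _ ->].
have Nb : ~ N b by move=> Nb; apply: Ec; apply: frob_base_expp.
have E0c : ~ adjoin E (fun _ => False) c.
  by rewrite adjoin_id //; apply: adjoin_subfield.
have aE x : x \in a -> E (x ^+ p) by move/aN; apply: frob_base_expp.
have [a' [sza a'a Ea']] := indep_extend_base (@adjoin_gen _ E) (@adjoin_gen_sub E)
  (@adjoin_exchange E) (frob_base_expp (k := k) Nbp) E0c aE Ea.
have E'a' : indep (adjoin (frob_base k N')) (fun _ => False) a'.
  apply: indep_transfer Ea' => X; rewrite E'E -adjoinU.
  by congr adjoin; apply/predeqP => z; tauto.
exists (rcons a' b); last by rewrite size_rcons.
split.
  apply/indep_rcons; split => // /(adjoin_min N_sf) clbN; apply: Nb; apply: clbN.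
    by rewrite E'E; apply: adjoin_min => //; [apply: frob_base_sub | move=> _ ->].
  by move=> z [[]|/a'a/aN].
by move=> x; rewrite mem_rcons inE => /orP[/eqP->|/a'a/aN/NN'] //; apply: adjoin_gen.
Qed.

Lemma adjoin1_absorb N g h : adjoin N (fun z => z = g) h ->
  adjoin (adjoin N (fun z => z = h)) (fun z => z = g) = adjoin N (fun z => z = g).
Proof.
move=> Ngh; apply/predeqP => x; split; apply: adjoin_sub.
- by apply: adjoin_sub => [w|_ ->] //; apply: adjoin_base.
- by move=> _ ->; apply: adjoin_gen.
- by move=> w Nw; do 2!apply: adjoin_base.
- by move=> _ ->; apply: adjoin_gen.
Qed.

Lemma has_pindep_adjoin_root k N g e t : is_subfield N -> psubset k N ->
  N (g ^+ (p ^ e)) -> has_pindep k N t -> has_pindep k (adjoin N (fun z => z = g)) t.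
Proof.
elim: e N g => [|e IH] N g N_sf kN Ng hN.
  by move: Ng; rewrite expn0 expr1 => Ng; rewrite adjoin_id // => _ ->.
set N1 := adjoin N (fun z => z = g ^+ p).
have kN1 : psubset k N1 by move=> z /kN; apply: adjoin_base.
have [a pa sza] : has_pindep k N1 t by apply: IH => //; rewrite -exprM -expnS.
have N1gp : N1 (g ^+ p) by apply: adjoin_gen.
have [a' pa' sza'] := pindep_adjoin1 (adjoin_subfield _ _) kN1 N1gp pa.
rewrite -(@adjoin1_absorb N g (g ^+ p)).
  by exists a' => //; apply: leq_trans sza'.
by apply: (subfieldX (adjoin_subfield _ _)); apply: adjoin_gen.
Qed.

Lemma has_pindep_adjoin_seq k N l t : is_subfield N -> psubset k N ->
  (forall g, g \in l -> exists e, k (g ^+ (p ^ e))) ->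
  has_pindep k N t -> has_pindep k (adjoin N (fun z => z \in l)) t.
Proof.
elim: l N => [|g l IH] N N_sf kN lk hN.
  by rewrite adjoin_id // => z; rewrite in_nil.
have -> : adjoin N (fun z => z \in g :: l) =
          adjoin (adjoin N (fun z => z = g)) (fun z => z \in l).
  by rewrite -adjoinU; congr adjoin; apply/predeqP => z; rewrite in_consP.
apply: IH; first exact: adjoin_subfield.
- by move=> z /kN; apply: adjoin_base.
- by move=> z zl; apply: lk; rewrite inE zl orbT.
have [e ke] := lk g (mem_head _ _).
exact: has_pindep_adjoin_root (kN _ ke) hN.
Qed.

Lemma pindep_size_le k M (g : seq F) a : is_subfield M -> psubset k M ->
  psubset M (adjoin k (fun z => z \in g)) ->
  (forall x, x \in g -> exists e, k (x ^+ (p ^ e))) ->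
  pindep k M a -> (size a <= size g)%N.
Proof.
move=> M_sf kM Mg gk pa.
set M2 := adjoin k (fun z => z \in g).
have M2E : adjoin M (fun z => z \in g) = M2.
  apply/predeqP => x; split; apply: adjoin_sub.
  - exact: Mg.
  - by move=> z zg; apply: adjoin_gen.
  - by move=> z /kM; apply: adjoin_base.
  - by move=> z zg; apply: adjoin_gen.
have [a' [Ea' a'M2] sza] : has_pindep k M2 (size a).
  by rewrite -M2E; apply: has_pindep_adjoin_seq => //; exists a.
apply: leq_trans sza (adjoin_steinitz Ea' _ _) => [z zg | x /a'M2].
  by apply: frob_base_expp; apply: adjoin_gen.
by apply: adjoin_sub => [w kw|w wg]; [do 2!apply: adjoin_base | apply: adjoin_gen].
Qed.

Lemma exists_spanning_pindep k M (g : seq F) : is_subfield M -> psubset k M ->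
  psubset M (adjoin k (fun z => z \in g)) ->
  (forall x, x \in g -> exists e, k (x ^+ (p ^ e))) ->
  exists2 a, pindep k M a & psubset M (adjoin (frob_base k M) (fun z => False \/ z \in a)).
Proof.
move=> M_sf kM Mg gk.
pose has_pindep_of n := `[< exists2 a, pindep k M a & size a = n >].
have exP : exists n, has_pindep_of n.
  by exists 0%N; apply/asboolP; exists [::] => //; split => // x; rewrite in_nil.
have ubP n : has_pindep_of n -> (n <= size g)%N.
  by move/asboolP => [a pa <-]; apply: pindep_size_le pa.
case: (ex_maxnP exP ubP) => _ /asboolP[a [Ea aM] <-] maxa.
exists a => // x Mx; apply: contrapT => Nx.
suff : (size (rcons a x) <= size a)%N by rewrite size_rcons ltnn.
apply/maxa/asboolP; exists (rcons a x) => //; split; first exact/indep_rcons.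
by move=> z; rewrite mem_rcons inE => /orP[/eqP->|/aM].
Qed.

(* Iterating M ⊆ k(M^p, a) gives M ⊆ k(M^(p^i), a) for every i, and M^(p^e) ⊆ k. *)
Lemma frob_base_spanning_gen k M a e : is_subfield k ->
  (forall x, M x -> k (x ^+ (p ^ e))) ->
  psubset M (adjoin (frob_base k M) (fun z => False \/ z \in a)) ->
  psubset M (adjoin k (fun z => z \in a)).
Proof.
move=> k_sf ke Msp; set A := adjoin k (fun z => z \in a).
have kA : psubset k A by move=> z; apply: adjoin_base.
have MpA i : psubset M (adjoin A (powimg M (p ^ i))).
  elim: i => [|i IH] x; first by move=> Mx; apply: adjoin_gen; exists x; rewrite expn0 expr1.
  move/IH; apply: adjoin_gen_sub => _ [y [My ->]].
  have : adjoin k (fun z => powimg M p z \/ (False \/ z \in a)) y.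
    by rewrite adjoinU; apply: Msp.
  move/(adjoin_frob p_char (m := i)); apply: adjoin_sub.
    by move=> w /(powimg_sub k_sf) kw; apply: adjoin_base; apply: kA.
  move=> _ [v [[[u [Mu ->]]|[[]|va]] ->]].
    by apply: adjoin_gen; exists u; split => //; rewrite -exprM -expnS.
  by apply: adjoin_base; apply: (subfieldX (adjoin_subfield _ _)); apply: adjoin_gen.
move=> x /(MpA e); rewrite adjoin_id //; first exact: adjoin_subfield.
by move=> _ [y [My ->]]; apply: kA; apply: ke.
Qed.

End PIndependence.

Lemma exists_minimal_gen (F : fieldType) (k M : F -> Prop) (l : seq F) :
  (forall x, M x <-> adjoin k (fun z => z \in l) x) ->
  exists G, minimal_gen k M G /\ card_lt G (size l).+1.
Proof.
move=> Ml.
pose gen n := `[< exists2 l', (forall x, M x <-> adjoin k (fun z => z \in l') x) & size l' = n >].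
have exP : exists n, gen n by exists (size l); apply/asboolP; exists l.
case: (ex_minnP exP) => _ /asboolP[l' Ml' <-] minl'.
exists (fun z => z \in l'); split.
  split=> // x xl' xred.
  have in_rem y : y \in l' -> y <> x -> y \in rem x l'.
    by rewrite (perm_mem (perm_to_rem xl')) inE => /orP[/eqP|].
  have eq_rem z : adjoin k (fun z => z \in l') z <-> adjoin k (fun z => z \in rem x l') z.
    split; apply: adjoin_sub => w; try exact: adjoin_base.
      move=> wl'; have [->|wx] := eqVneq w x.
        move: xred; apply: adjoin_sub => [v|v [vl' vx]]; first exact: adjoin_base.
        by apply: adjoin_gen; apply: in_rem.
      by apply: adjoin_gen; apply: in_rem => //; apply/eqP.
    by move=> /mem_rem wl'; apply: adjoin_gen.
  have : (size l' <= size (rem x l'))%N.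
    by apply: minl'; apply/asboolP; exists (rem x l') => // z; rewrite Ml'.
  have l'_gt0 : (0 < size l')%N by case: (l') xl'.
  by rewrite size_rem //; lia.
exists (undup l'); split; [exact: undup_uniq | by move=> x; rewrite mem_undup |].
have l'_le : (size l' <= size l)%N by apply: minl'; apply/asboolP; exists l.
by rewrite ltnS (leq_trans (size_undup _)).
Qed.

(** * Monotonicity of di, o_s and U_s *)

Section Invariants.
Variables (F : fieldType) (p : nat).
Hypothesis p_char : p \in [pchar F].
Variable k : F -> Prop.
Hypothesis k_sf : is_subfield k.
Implicit Types (M K L : F -> Prop).

Lemma minimal_gen_sub M1 M2 e (g : seq F) s :
  is_subfield M1 -> psubset k M1 -> psubset M1 M2 ->
  (forall x, M2 x -> k (x ^+ (p ^ e))) ->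
  (forall x, M2 x <-> adjoin k (fun z => z \in g) x) -> (size g < s)%N ->
  exists G, minimal_gen k M1 G /\ card_lt G s.
Proof.
move=> M1_sf kM1 M12 M2e M2g szg.
have M1g : psubset M1 (adjoin k (fun z => z \in g)) by move=> x /M12 /M2g.
have gk x : x \in g -> exists e, k (x ^+ (p ^ e)).
  by move=> xg; exists e; apply: M2e; apply/M2g; apply: adjoin_gen.
have [a [Ea aM1] M1a] := exists_spanning_pindep p_char M1_sf kM1 M1g gk.
have M1E x : M1 x <-> adjoin k (fun z => z \in a) x.
  split; last by apply: adjoin_min => // z /aM1.
  by apply: (frob_base_spanning_gen p_char (e := e) k_sf) => // y /M12 /M2e.
have [G [minG [l [ul Gl szl]]]] := exists_minimal_gen M1E.
exists G; split => //; exists l; split => //.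
exact: leq_trans szl (leq_ltn_trans (pindep_size_le p_char M1_sf kM1 M1g gk (conj Ea aM1)) szg).
Qed.

Lemma root_part_subfield K n : is_subfield K -> is_subfield (root_part p k K n).
Proof.
move=> K_sf; have k_n := subfield_frob_preim p_char n k_sf.
split=> [||x y [Kx kx] [Ky ky]|x y [Kx kx] [Ky ky]|x [Kx kx] _].
- by split; [apply: subfield0 | apply: (subfield0 k_n)].
- by split; [apply: subfield1 | apply: (subfield1 k_n)].
- by split; [apply: subfieldB | apply: (subfieldB k_n)].
- by split; [apply: subfieldM | apply: (subfieldM k_n)].
- by split; [apply: subfieldV | apply: (subfieldV k_n)].
Qed.

Lemma root_part_sub K K' n : psubset K K' ->
  psubset (root_part p k K n) (root_part p k K' n).
Proof. by move=> KK' x [Kx kx]; split => //; apply: KK'. Qed.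

Lemma di_lt_sub M1 M2 s : is_subfield M1 -> psubset k M1 -> psubset M1 M2 ->
  di_lt p k M2 s -> di_lt p k M1 s.
Proof.
move=> M1_sf kM1 M12 M2s n; have [G [[M2G _] [g [_ Gg szg]]]] := M2s n.
apply: (minimal_gen_sub (M2 := root_part p k M2 n) (e := n) (g := g)) => //.
- exact: root_part_subfield.
- by move=> x kx; split; [apply: kM1 | apply: subfieldX].
- exact: root_part_sub.
- by move=> x [].
- by have <- : G = (fun z => z \in g) by apply/predeqP.
Qed.

Lemma di_lt_base s : (0 < s)%N -> di_lt p k k s.
Proof.
move=> s_gt0 n; exists (fun _ => False); split; last by exists [::].
split=> // x; rewrite adjoin_id //; split=> [[] // | kx]; split=> //.
exact: subfieldX.
Qed.

Lemma is_o_exists L s n : (0 < s)%N -> (forall x, L x -> k (x ^+ (p ^ n))) ->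
  exists o, is_o p k L s o.
Proof.
move=> s_gt0 Ln.
have exP : exists m, `[< di_lt p k (frob_adjoin p k L m) s >].
  exists n; apply/asboolP; rewrite /frob_adjoin adjoin_id //; first exact: di_lt_base.
  by move=> _ [x [Lx ->]]; apply: Ln.
case: (ex_minnP exP) => o /asboolP Lo mino.
by exists o; split => // m Lm; apply/mino/asboolP.
Qed.

Lemma is_o_le L1 L2 s o1 o2 e : is_o p k L1 s o1 -> is_o p k L2 s o2 ->
  (forall x, L2 x -> L1 (x ^+ (p ^ e))) -> (o2 <= o1 + e)%N.
Proof.
move=> [L1s _] [_ minL2] L21; apply: minL2.
apply: (di_lt_sub (adjoin_subfield _ _) _ _ L1s) => [x kx|]; first exact: adjoin_base.
apply: adjoin_sub => [x kx| _ [x [L2x ->]]]; first exact: adjoin_base.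
by apply: adjoin_gen; exists (x ^+ (p ^ e)); split; [apply: L21 | rewrite -exprM -expnD addnC].
Qed.

Lemma is_U_le K K' e s n u u' : (forall x, K' x -> K (x ^+ (p ^ e))) ->
  is_U p k K s n u -> is_U p k K' s n u' -> u - e%:Z <= u'.
Proof.
move=> K'K [o [Ko ->]] [o' [K'o ->]].
suff : (o' <= o + e)%N by lia.
apply: is_o_le Ko K'o _ => x [K'x kx]; split; first exact: K'K.
by rewrite -exprM mulnC exprM; apply: subfieldX.
Qed.

Lemma is_U_exists K s n : (0 < s)%N -> exists u, is_U p k K s n u.
Proof.
move=> s_gt0; have [o Ko] := is_o_exists (L := root_part p k K n) s_gt0 (fun x => @proj2 _ _).
by exists (n%:Z - o%:Z), o.
Qed.

Lemma U_unbounded_shift K K' e s :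
  (forall j u u', is_U p k K s j u -> is_U p k K' s j u' -> u - e%:Z <= u') ->
  (0 < s)%N -> U_unbounded p k K s -> U_unbounded p k K' s.
Proof.
move=> KK' s_gt0 Kun B; have [j [u [Ku Bu]]] := Kun (B + e%:Z).
have [u' K'u'] := is_U_exists K' j s_gt0.
exists j, u'; split => //; have := KK' _ _ _ Ku K'u'; lia.
Qed.

Lemma is_Ilqm_le K K' t t' :
  (forall s, (0 < s)%N -> U_unbounded p k K s -> U_unbounded p k K' s) ->
  is_Ilqm p k K t -> is_Ilqm p k K' t' -> (t' <= t)%N.
Proof. by move=> KK' [t_gt0 Kt _] [_ _ min']; apply: min' (KK' _ t_gt0 Kt). Qed.

End Invariants.

(** * Finite extensions *)

Section Span.
Variables (F : fieldType) (E : F -> Prop).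
Hypothesis E_sf : is_subfield E.
Implicit Types (A V : F -> Prop).

Definition subspace V :=
  [/\ V 0, (forall u v, V u -> V v -> V (u + v)) & (forall c v, E c -> V v -> V (c * v))].

Definition span A : F -> Prop := fun x => forall V, subspace V -> psubset A V -> V x.

Lemma span_subspace A : subspace (span A).
Proof.
split=> [V [V0 _ _] _ //|u v Au Av V V_sub AV|c v Ec Av V V_sub AV].
  by have [_ VD _] := V_sub; apply: VD; [apply: Au | apply: Av].
by have [_ _ VM] := V_sub; apply: VM => //; apply: Av.
Qed.

Lemma span_gen A x : A x -> span A x.
Proof. by move=> Ax V _; apply. Qed.

Lemma span_sub A B : (forall x, A x -> span B x) -> forall x, span A x -> span B x.
Proof. by move=> AB x; apply; [apply: span_subspace | apply: AB]. Qed.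

Lemma span_exchange A x y :
  span (fun z => A z \/ z = x) y -> ~ span A y -> span (fun z => A z \/ z = y) x.
Proof.
move=> Axy Ay.
set W := fun z => exists a c, [/\ span A a, E c & z = a + c * x].
have [A0 AD AM] := span_subspace A.
have W_sub : subspace W.
  split; first by exists 0, 0; rewrite mul0r addr0; split => //; apply: subfield0.
    move=> _ _ [a [c [Aa Ec ->]]] [a' [c' [Aa' Ec' ->]]].
    by exists (a + a'), (c + c'); rewrite mulrDl addrACA; split; [apply: AD | apply: subfieldD |].
  move=> c' _ Ec' [a [c [Aa Ec ->]]].
  by exists (c' * a), (c' * c); rewrite mulrDr mulrA; split; [apply: AM | apply: subfieldM |].
have [a [c [Aa Ec y_eq]]] : W y.
  apply: (Axy W W_sub) => z [Az|->].
    by exists z, 0; rewrite mul0r addr0; split => //; [apply: span_gen | apply: subfield0].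
  by exists 0, 1; rewrite mul1r add0r; split => //; apply: subfield1.
have c_neq0 : c != 0 by apply: contra_not_neq Ay => c0; rewrite y_eq c0 mul0r addr0.
have -> : x = c^-1 * y + (- c^-1) * a.
  by rewrite y_eq mulrDr mulrA mulVf // mul1r mulNr addrC addKr.
have [_ AyD AyM] := span_subspace (fun z => A z \/ z = y).
apply: AyD; apply: AyM.
- exact (subfieldV E_sf Ec).
- by apply: span_gen; right.
- exact (subfieldN E_sf (subfieldV E_sf Ec)).
- by move: Aa; apply: span_sub => z Az; apply: span_gen; left.
Qed.

Lemma span_sub_adjoin A : psubset (span A) (adjoin E A).
Proof.
move=> x Ax; have A_sf : is_subfield (adjoin E A) by apply: adjoin_subfield.
apply: (Ax (adjoin E A)) => [|z Az]; last exact: adjoin_gen.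
split=> [|u v Au Av|c v Ec Av]; [exact: subfield0 A_sf | exact (subfieldD A_sf Au Av) |].
have EcA : adjoin E A c by apply: adjoin_base.
exact (subfieldM A_sf EcA Av).
Qed.

Lemma span_steinitz a (G : seq F) : indep span (fun _ => False) a ->
  (forall x, x \in a -> span (fun z => z \in G) x) -> (size a <= size G)%N.
Proof.
move=> Ea aG; apply: (steinitz (P := fun _ => True) span_gen span_sub
  (fun A x y _ => @span_exchange A x y) Ea) => // x /aG.
by apply: span_sub => z Gz; apply: span_gen; right.
Qed.

End Span.

Section FiniteExponent.
Variables (F : fieldType) (p : nat).
Hypothesis p_char : p \in [pchar F].

(* For [i <= j], the powers [1, x^(p^(j-1)), ..., x^(p^(j-i))] are linearly
   independent over [K] when [j] is the exponent of [x] over [K]. *)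
Lemma frob_chain_indep (K : F -> Prop) x j : is_subfield K -> K (x ^+ (p ^ j)) ->
  (forall i, (i < j)%N -> ~ K (x ^+ (p ^ i))) ->
  forall i, (i <= j)%N -> exists a, [/\ size a = i.+1, indep (span K) (fun _ => False) a &
    forall z, z \in a -> adjoin K (fun w => w = x ^+ (p ^ (j - i))) z].
Proof.
move=> K_sf Kj notK; elim=> [|i IH] ij.
  exists [:: 1]; split=> //= [|z]; last first.
    by rewrite inE => /eqP->; apply: subfield1 (adjoin_subfield _ _).
  split=> // span1; have : (1 : F) = 0.
    apply: (span1 (fun z => z = 0)) => [|_ []].
    by split=> // [u v -> ->|c v _ ->]; rewrite ?addr0 ?mulr0.
  by move/eqP; rewrite oner_eq0.
have [a [sza Ea aK]] := IH (ltnW ij).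
set z := x ^+ (p ^ (j - i.+1)).
have zp : z ^+ p = x ^+ (p ^ (j - i)) by rewrite /z -exprM -expnSr subnSK.
have Nz : ~ adjoin K (fun w => w = z ^+ p) z.
  move=> /(adjoin_frob p_char (m := i)) zK; apply: (notK j.-1); first by rewrite ltn_predL; lia.
  have -> : x ^+ (p ^ j.-1) = z ^+ (p ^ i) by rewrite /z -exprM -expnD; congr (_ ^+ (p ^ _)); lia.
  apply: adjoin_min zK => //; first exact: powimg_sub.
  by move=> _ [_ [-> ->]]; rewrite zp -exprM -expnD subnK // ltnW.
exists (rcons a z); split; first by rewrite size_rcons sza.
  apply/indep_rcons; split => // /span_sub_adjoin zspan; apply: Nz; rewrite zp.
  by move: zspan; apply: adjoin_sub => [w Kw|w [[]|/aK]] //; apply: adjoin_base.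
move=> w; rewrite mem_rcons inE => /orP[/eqP->|/aK]; first exact: adjoin_gen.
apply: adjoin_sub => [v Kv|_ ->]; first exact: adjoin_base.
by rewrite -zp; apply: (subfieldX (adjoin_subfield _ _)); apply: adjoin_gen.
Qed.

Lemma span_frob_exponent (K1 K2 : F -> Prop) (b : seq F) :
  is_subfield K1 -> is_subfield K2 -> psubset K1 K2 ->
  (forall x, K2 x -> exists n, K1 (x ^+ (p ^ n))) ->
  (forall x, K2 x -> span K1 (fun z => z \in b) x) ->
  forall x, K2 x -> K1 (x ^+ (p ^ size b)).
Proof.
move=> K1_sf K2_sf K12 K2K1 K2b x K2x.
have exn : exists n, `[< K1 (x ^+ (p ^ n)) >].
  by have [n K1n] := K2K1 x K2x; exists n; apply/asboolP.
case: (ex_minnP exn) => j /asboolP K1j minj.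
have notK i : (i < j)%N -> ~ K1 (x ^+ (p ^ i)).
  by move=> ij /asboolP/minj; rewrite leqNgt ij.
have [a [sza Ea aK]] := frob_chain_indep K1_sf K1j notK (leqnn j).
have j_lt : (j < size b)%N.
  rewrite -sza; apply: (span_steinitz K1_sf Ea) => z /aK; rewrite subnn expn0 expr1 => xz.
  by apply: K2b; move: xz; apply: adjoin_min => // _ ->.
by rewrite -(subnKC (ltnW j_lt)) expnD exprM; apply: subfieldX.
Qed.

End FiniteExponent.

Lemma finite_ext_span (F : fieldType) (K1 K2 : F -> Prop) : finite_ext K1 K2 ->
  exists b : seq F, forall x, K2 x -> span K1 (fun z => z \in b) x.
Proof.
move=> [b K2b]; exists b => _ /K2b[c [szc K1c ->]].
have [S0 SD SM] := span_subspace K1 (fun z => z \in b).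
apply: (big_ind (span K1 (fun z => z \in b))) => // i _.
by apply: SM; [apply: K1c; rewrite szc | apply: span_gen; apply: mem_nth].
Qed.

Unset Implicit Arguments.
Theorem mainTheorem2 (Omega : closedFieldType) (p : nat) (k K1 K2 : Omega -> Prop) :
  prime p -> p \in [pchar Omega] ->
  is_subfield k ->
  (forall x : Omega, exists q : {poly Omega},
      [/\ q != 0, (forall i, k q`_i) & root q x]) ->
  is_subfield K1 -> is_subfield K2 ->
  psubset k K1 -> psubset K1 K2 ->
  purely_insep p k K2 ->
  q_finite p k K1 -> ~ bounded_exponent p k K1 ->
  q_finite p k K2 -> ~ bounded_exponent p k K2 ->
  [/\ (forall (s n : nat) (u1 u2 : int), (1 <= s)%N ->
          is_U p k K1 s n u1 -> is_U p k K2 s n u2 -> u2 <= u1),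
      (forall t1 t2, is_Ilqm p k K1 t1 -> is_Ilqm p k K2 t2 -> (t1 <= t2)%N) &
      (finite_ext K1 K2 ->
         forall t1 t2, is_Ilqm p k K1 t1 -> is_Ilqm p k K2 t2 -> t1 = t2)].
Proof.
move=> _ p_char k_sf _ K1_sf K2_sf kK1 K12 K2_insep _ _ _ _.
have U_le s n u1 u2 : is_U p k K1 s n u1 -> is_U p k K2 s n u2 -> u2 <= u1.
  move=> U1 U2; rewrite -[u2]subr0; apply: (is_U_le p_char k_sf _ U2 U1) => x /K12.
  by rewrite expn0 expr1.
have Ilqm_le t1 t2 : is_Ilqm p k K1 t1 -> is_Ilqm p k K2 t2 -> (t1 <= t2)%N.
  move=> I1 I2; apply: (is_Ilqm_le _ I2 I1) => s s_gt0.
  apply: (U_unbounded_shift p_char k_sf (e := 0)) => // j u2 u1 U2 U1.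
  by rewrite subr0; apply: U_le U1 U2.
split=> [s n u1 u2 _|t1 t2|fin t1 t2 I1 I2]; [exact: U_le | exact: Ilqm_le |].
apply/eqP; rewrite eqn_leq Ilqm_le //=.
have [b K2b] := finite_ext_span fin.
have K2_insep1 x : K2 x -> exists n, K1 (x ^+ (p ^ n)).
  by move=> /K2_insep[n kn]; exists n; apply: kK1.
have K2K1 := span_frob_exponent p_char K1_sf K2_sf K12 K2_insep1 K2b.
apply: (is_Ilqm_le _ I1 I2) => s s_gt0.
apply: (U_unbounded_shift p_char k_sf (e := size b) _ s_gt0) => j u1 u2 U1 U2.
exact (is_U_le p_char k_sf K2K1 U1 U2).
Qed.
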